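(* Let $G$ be a group, $A$ an alphabet for $G$, and $L\subset A^*$ a regular language such that $\bar L=G$ and the evaluation map $L\to G$ is finite-to-one. Then for each $g\in G$ there are only finitely many words $y\in A^*$ such that $xyz\in L$ for some $x,z\in A^*$ and $\bar y=g$.
   Context: An alphabet for $G$ is a finite set $A$ with a map $a\mapsto\bar a\in G$ whose image generates $G$ as a monoid; $w\mapsto\bar w$ denotes the induced monoid homomorphism $A^*\to G$. *)

From HB Require Import structures.
From mathcomp Require Import all_boot monoid.
Set Implicit Arguments. Unset Strict Implicit. Unset Printing Implicit Defensive.

Local Open Scope group_scope.

Definition word_eval (G : monoidType) (A : Type) (ev : A -> G) (w : seq A) : G :=
  foldr (fun a g => ev a * g) 1 w.

Definition is_alphabet (G : monoidType) (A : finType) (ev : A -> G) : Prop :=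
  forall g : G, exists w : seq A, word_eval ev w = g.

Record dfa (A : finType) := DFA {
  dfa_state : finType;
  dfa_start : dfa_state;
  dfa_trans : dfa_state -> A -> dfa_state;
  dfa_final : pred dfa_state }.

Definition dfa_accepts (A : finType) (M : dfa A) (w : seq A) : bool :=
  @dfa_final A M (foldl (@dfa_trans A M) (@dfa_start A M) w).

Definition regular (A : finType) (L : seq A -> Prop) : Prop :=
  exists M : dfa A, forall w, L w <-> dfa_accepts M w.

Definition finite_words (A : eqType) (S : seq A -> Prop) : Prop :=
  exists s : seq (seq A), forall w, S w -> w \in s.

From mathcomp Require Import all_boot monoid.
From Stdlib Require Import Classical.
Set Implicit Arguments. Unset Strict Implicit. Unset Printing Implicit Defensive.

(* Fixing the context: if [x y z] lies in [L] then [y |-> x y z] is injective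
   and lands in the [L]-words of value [x g z], a finite set.  A factor [y] of
   an accepted word leads from a reachable state [p] to a co-reachable state
   [q]; choosing one pair of such contexts per pair of states (p, q) puts all
   factors of value [g] into finitely many such finite sets. *)

Local Open Scope group_scope.

Lemma word_eval_cat (G : monoidType) (A : Type) (ev : A -> G) (s1 s2 : seq A) :
  word_eval ev (s1 ++ s2) = word_eval ev s1 * word_eval ev s2.
Proof. by elim: s1 => [|a s IH] /=; rewrite ?mul1g // IH mulgA. Qed.

Section FiniteWords.
Variable A : eqType.
Implicit Types (S T : seq A -> Prop).

Lemma finite_words_sub S T : (forall w, S w -> T w) ->
  finite_words T -> finite_words S.
Proof. by move=> ST [s Ts]; exists s => w /ST /Ts. Qed.

Lemma finite_words_can (B : eqType) (S : seq B -> Prop) T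
    (f : seq A -> seq B) (h : seq B -> seq A) :
  (forall y, T y -> S (f y) /\ h (f y) = y) ->
  finite_words S -> finite_words T.
Proof.
move=> TS [s Ss]; exists (map h s) => y /TS [/Ss Sfy <-].
exact: map_f.
Qed.

Lemma finite_words_bigcup (I : finType) (P : I -> seq A -> Prop) :
  (forall i, finite_words (P i)) -> finite_words (fun w => exists i, P i w).
Proof.
move=> finP; have [s Ps] : exists s : seq (seq A),
    forall w, (exists2 i, i \in enum I & P i w) -> w \in s.
  elim: (enum I) => [|i r [s Ps]]; first by exists [::] => w [].
  have [si Psi] := finP i; exists (si ++ s) => w [j].
  rewrite inE mem_cat => /predU1P [-> /Psi -> //|jr Pjw].
  by rewrite Ps ?orbT //; exists j.
by exists s => w [i Piw]; apply: Ps; exists i; rewrite ?mem_enum.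
Qed.

Lemma finite_words_inhabited S :
  ((exists w, S w) -> finite_words S) -> finite_words S.
Proof.
move=> finS; have [/finS //|noS] := classic (exists w, S w).
by exists [::] => w Sw; case: noS; exists w.
Qed.

End FiniteWords.

Lemma drop_take_infix (A : Type) (x y z : seq A) :
  drop (size x) (take (size (x ++ y ++ z) - size z) (x ++ y ++ z)) = y.
Proof. by rewrite catA size_cat addnK take_size_cat // drop_size_cat. Qed.

Section FixedContext.
Variables (G : groupType) (A : finType) (ev : A -> G) (L : seq A -> Prop).
Hypothesis L_fiber_finite :
  forall g : G, finite_words (fun w => L w /\ word_eval ev w = g).

Lemma finite_words_in_context (x z : seq A) (g : G) :
  finite_words (fun y => L (x ++ y ++ z) /\ word_eval ev y = g).
Proof.
apply: (finite_words_can (f := fun y => x ++ y ++ z)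
  (h := fun w => drop (size x) (take (size w - size z) w))
  _ (L_fiber_finite (word_eval ev x * g * word_eval ev z))).
move=> y [Lxyz evy]; split; last exact: drop_take_infix.
by rewrite !word_eval_cat evy mulgA.
Qed.

End FixedContext.

Section DFAFactors.
Variables (A : finType) (M : dfa A).
Local Notation run := (foldl (@dfa_trans A M)).
Local Notation start := (@dfa_start A M).

Lemma dfa_accepts_cat3 (x y z : seq A) :
  dfa_accepts M (x ++ y ++ z) = @dfa_final A M (run (run (run start x) y) z).
Proof. by rewrite /dfa_accepts !foldl_cat. Qed.

Definition factor_through (p q : dfa_state M) (y : seq A) : Prop :=
  [/\ exists x, run start x = p, exists z, @dfa_final A M (run q z)
    & run p y = q].

Lemma factor_through_state (x y z : seq A) :
  dfa_accepts M (x ++ y ++ z) ->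
  factor_through (run start x) (run (run start x) y) y.
Proof.
by rewrite dfa_accepts_cat3 => acc; split=> //; [exists x | exists z].
Qed.

Lemma factor_through_accepts (p q : dfa_state M) (y : seq A) :
  factor_through p q y ->
  exists x z, forall y', run p y' = q -> dfa_accepts M (x ++ y' ++ z).
Proof.
case=> [[x px] [z qz] _]; exists x, z => y' pq.
by rewrite dfa_accepts_cat3 px pq.
Qed.

End DFAFactors.

Theorem lemma3p4 (G : groupType) (A : finType) (ev : A -> G)
    (L : seq A -> Prop) :
  is_alphabet ev ->
  regular L ->
  (forall g : G, exists w, L w /\ word_eval ev w = g) ->
  (forall g : G, finite_words (fun w => L w /\ word_eval ev w = g)) ->
  forall g : G,
    finite_words (fun y => (exists x z : seq A, L (x ++ y ++ z)) /\
                           word_eval ev y = g).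
Proof.
move=> _ [M LM] _ L_fiber_finite g.
pose S (pq : dfa_state M * dfa_state M) y :=
  factor_through pq.1 pq.2 y /\ word_eval ev y = g.
apply: (finite_words_sub (T := fun y => exists pq, S pq y)).
  move=> y [[x [z /LM /factor_through_state Fy]] evy].
  set p := foldl _ _ x in Fy.
  by exists (p, foldl (@dfa_trans A M) p y).
apply: finite_words_bigcup => pq; apply: finite_words_inhabited.
case=> y0 [/factor_through_accepts [x [z acc]] _].
apply: finite_words_sub (finite_words_in_context L_fiber_finite x z g).
by move=> y [[_ _ pqy] evy]; split=> //; apply/LM/acc.
Qed.
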